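(* Let $f:[0,\infty)\to[0,\infty)$ be continuously differentiable with $f>0$ on $[t_0,\infty)$ for some $t_0\ge0$ and $f\in C^2([t_0,\infty))$, let $g=\log f$ on $[t_0,\infty)$, assume condition (H1) of the context with the pair $(q,p)$, and set $F(t)=\int_0^t f(s)\,ds$. Then $$\limsup_{t\to\infty}\left(\frac{F(t)\log F(t)}{f(t)}\right)'\le\frac1p,$$ where $1/\infty=0$.
   Context: Condition (H1): (i) $g'(t)>0$ and $g''(t)>0$ for all $t\ge t_0$, and there is a pair $(q,p)$ with either $q=1$ and $p\in(0,\infty]$, or $q\in(1,\infty)$ and $p\in(0,\infty)$, such that $\lim_{t\to\infty}\frac{g'(t)^2}{g(t)g''(t)}=q$ and $\lim_{t\to\infty}\frac{tg'(t)}{g(t)}=p$; (ii) if $q=1$, then $tg'(t)/g(t)$ is nondecreasing on $[t_0,\infty)$ and there exist $k\in\mathbb{N}$ and $\hat g\in C^2([t_0,\infty))$ with $f=\exp_k\circ\hat g$ and $\hat g'/\hat g$ nonincreasing on $[t_0,\infty)$ ($\exp_1=\exp$, $\exp_k=\exp_{k-1}\circ\exp$). *)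

From Stdlib Require Import Reals.
From Coquelicot Require Import Coquelicot.
Open Scope R_scope.

Definition deriv_within (D : R -> Prop) (u u' : R -> R) (x : R) : Prop :=
  forall eps, 0 < eps -> exists delta, 0 < delta /\
    forall y, D y -> Rabs (y - x) < delta ->
      Rabs (u y - u x - u' x * (y - x)) <= eps * Rabs (y - x).

Definition cont_within (D : R -> Prop) (u : R -> R) (x : R) : Prop :=
  forall eps, 0 < eps -> exists delta, 0 < delta /\
    forall y, D y -> Rabs (y - x) < delta -> Rabs (u y - u x) < eps.

Definition exp_iter (k : nat) (x : R) : R := Nat.iter k exp x.

(* 1/p with the convention 1/oo = 0 (only used for p in (0, +oo]). *)
Definition recip_ext (p : Rbar) : R :=
  match p with Finite r => / r | _ => 0 end.

(* Write G = ln f, so that f' = f G' with G increasing and convex, and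
   (F ln F / f)' = 1 - ln F (F G' / f - 1).  Since G G'' / G'^2 -> 1/q, for each k < 1/q the
   function F - f/G' - k f/(G' G) is eventually nondecreasing while f/(G' G) -> oo, so that
   F G'/f - 1 >= k/G eventually.  Moreover G G'' <= 2 G'^2 eventually, so G'/G^2 is eventually
   nonincreasing: G' grows at most like G^2, whence ln F >= ln (f/G') >= (1 - eta) G.  Together
   these give limsup (F ln F / f)' <= 1 - 1/q.  Finally 1 - 1/q <= 1/p: trivially when q = 1,
   and when q > 1 because the index rho = t G'/G -> p satisfies
   t rho' -> p (1 + p (1/q - 1)), which cannot be negative as rho converges. *)

From Stdlib Require Import Reals Lra.
From Coquelicot Require Import Coquelicot.
Open Scope R_scope.

Lemma is_derive_of_deriv_within (a : R) (u u' : R -> R) (x : R) :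
  a < x -> deriv_within (fun s => a <= s) u u' x -> is_derive u x (u' x).
Proof.
  intros Hax Hd. apply is_derive_Reals. intros eps Heps.
  destruct (Hd (eps / 2)) as [d [Hd0 Hd1]]; [lra|].
  assert (Hm : 0 < Rmin d (x - a)) by (apply Rmin_glb_lt; lra).
  exists (mkposreal _ Hm). intros hh Hh0 Hh. simpl in Hh.
  assert (Hh1 : Rabs hh < d) by (eapply Rlt_le_trans; [exact Hh | apply Rmin_l]).
  assert (Hh2 : Rabs hh < x - a) by (eapply Rlt_le_trans; [exact Hh | apply Rmin_r]).
  assert (Hy : a <= x + hh) by (apply Rabs_def2 in Hh2; lra).
  specialize (Hd1 (x + hh) Hy). replace (x + hh - x) with hh in Hd1 by ring.
  specialize (Hd1 Hh1).
  assert (Hpos : 0 < Rabs hh) by (apply Rabs_pos_lt; exact Hh0).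
  replace ((u (x + hh) - u x) / hh - u' x) with ((u (x + hh) - u x - u' x * hh) / hh)
    by (field; exact Hh0).
  unfold Rdiv. rewrite Rabs_mult, Rabs_inv.
  apply (Rmult_lt_reg_r (Rabs hh)); [exact Hpos|].
  rewrite Rmult_assoc, Rinv_l by lra. nra.
Qed.

Lemma cont_within_of_deriv_within (D : R -> Prop) (u u' : R -> R) (x : R) :
  deriv_within D u u' x -> cont_within D u x.
Proof.
  intros Hd eps Heps.
  destruct (Hd 1 Rlt_0_1) as [d [Hd0 Hd1]].
  set (K := Rabs (u' x) + 1).
  assert (HK : 0 < K) by (unfold K; pose proof (Rabs_pos (u' x)); lra).
  assert (Hm : 0 < Rmin d (eps / K)).
  { apply Rmin_glb_lt; [lra | apply Rdiv_lt_0_compat; lra]. }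
  exists (Rmin d (eps / K)). split; [exact Hm|]. intros y Hy Hyx.
  assert (Hyd : Rabs (y - x) < d) by (eapply Rlt_le_trans; [exact Hyx | apply Rmin_l]).
  assert (Hye : K * Rabs (y - x) < eps).
  { assert (Hyk : Rabs (y - x) < eps / K)
      by (eapply Rlt_le_trans; [exact Hyx | apply Rmin_r]).
    apply (Rmult_lt_compat_l K) in Hyk; [|exact HK].
    replace (K * (eps / K)) with eps in Hyk by (field; lra). exact Hyk. }
  specialize (Hd1 y Hy Hyd).
  replace (u y - u x) with ((u y - u x - u' x * (y - x)) + u' x * (y - x)) by ring.
  eapply Rle_lt_trans; [apply Rabs_triang|]. rewrite Rabs_mult. unfold K in Hye. lra.
Qed.

Lemma continuous_comp_Rmax0 (u : R -> R) :
  (forall x, 0 <= x -> cont_within (fun s => 0 <= s) u x) ->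
  forall x, continuous (fun y => u (Rmax 0 y)) x.
Proof.
  intros Hu x. apply continuity_pt_filterlim. intros eps Heps.
  destruct (Hu (Rmax 0 x) (Rmax_l 0 x) eps Heps) as [d [Hd0 Hd]].
  exists d. split; [exact Hd0|]. intros y [_ Hy]. simpl in *. unfold R_dist in *.
  apply Hd; [apply Rmax_l|].
  eapply Rle_lt_trans; [|exact Hy].
  unfold Rmax; repeat destruct Rle_dec; unfold Rabs; repeat destruct Rcase_abs; lra.
Qed.

(* [ex_RInt_continuous] needs two-sided continuity on [[0, t]]; the clamped [u (Rmax 0 _)]
   has it and agrees with [u] on [[0, t]]. *)
Lemma is_derive_RInt0 (u : R -> R) :
  (forall x, 0 <= x -> cont_within (fun s => 0 <= s) u x) ->
  forall t, 0 < t -> is_derive (fun t => RInt u 0 t) t (u t).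
Proof.
  intros Hu t Ht.
  set (v := fun y => u (Rmax 0 y)).
  assert (Hv : forall y, continuous v y) by exact (continuous_comp_Rmax0 u Hu).
  assert (Hvt : v t = u t) by (unfold v; rewrite Rmax_right; lra).
  rewrite <- Hvt.
  apply (is_derive_ext_loc (fun t => RInt v 0 t) (fun t => RInt u 0 t)).
  - exists (mkposreal t Ht). intros y Hy.
    apply Rabs_lt_between' in Hy. simpl in Hy.
    apply RInt_ext. intros z Hz. rewrite Rmin_left in Hz by lra.
    unfold v. rewrite Rmax_right; lra.
  - apply (is_derive_RInt v (fun t => RInt v 0 t) 0 t); [|apply Hv].
    apply filter_forall. intro b. apply (RInt_correct (V := R_CompleteNormedModule)).
    apply (ex_RInt_continuous (V := R_CompleteNormedModule)). intros; apply Hv.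
Qed.

Lemma nondecreasing_of_derive_nonneg (u du : R -> R) (a : R) :
  (forall x, a <= x -> is_derive u x (du x)) ->
  (forall x, a <= x -> 0 <= du x) ->
  forall x y, a <= x -> x <= y -> u x <= u y.
Proof.
  intros Hd Hp x y Hx Hxy.
  destruct (Req_dec x y) as [<- | Hne]; [lra|].
  destruct (MVT_cor2 u du x y) as [c [Hc1 Hc2]]; [lra | |].
  - intros c Hc. apply is_derive_Reals. apply Hd. lra.
  - assert (0 <= du c) by (apply Hp; lra). nra.
Qed.

Lemma pow_div_fact_le_exp (n : nat) (x : R) :
  0 <= x -> x ^ n / INR (Factorial.fact n) <= exp x.
Proof.
  intros Hx. eapply Rle_trans; [|exact (exp_ge_taylor x n Hx)].
  assert (Hterm : forall k, 0 <= x ^ k / INR (Factorial.fact k)).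
  { intros k. apply Rdiv_le_0_compat; [apply pow_le; exact Hx | apply INR_fact_lt_0]. }
  destruct n as [|n].
  - simpl. lra.
  - rewrite tech5.
    pose proof (cond_pos_sum (fun k => x ^ k / INR (Factorial.fact k)) n Hterm). lra.
Qed.

Lemma is_lim_eventually_lt (u : R -> R) (l m : R) :
  is_lim u p_infty l -> l < m -> Rbar_locally p_infty (fun x => u x < m).
Proof.
  intros Hu Hlm. apply (Hu (fun y => y < m)).
  assert (Hd : 0 < m - l) by lra. exists (mkposreal _ Hd). intros y Hy.
  apply Rabs_lt_between' in Hy. simpl in Hy. lra.
Qed.

Lemma is_lim_eventually_gt (u : R -> R) (l m : R) :
  is_lim u p_infty l -> m < l -> Rbar_locally p_infty (fun x => m < u x).
Proof.
  intros Hu Hlm. apply (Hu (fun y => m < y)).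
  assert (Hd : 0 < l - m) by lra. exists (mkposreal _ Hd). intros y Hy.
  apply Rabs_lt_between' in Hy. simpl in Hy. lra.
Qed.

(* [rho + c ln] is nonincreasing, while [c ln] tends to [+oo]. *)
Lemma not_is_lim_of_mul_derive_le_neg (rho drho : R -> R) (T c l : R) :
  0 < T -> 0 < c ->
  (forall x, T <= x -> is_derive rho x (drho x)) ->
  (forall x, T <= x -> x * drho x <= - c) ->
  ~ is_lim rho p_infty l.
Proof.
  intros HT Hc Hd Hneg Hl.
  assert (Hmono : forall x, T <= x -> rho x + c * ln x <= rho T + c * ln T).
  { intros x Hx. apply Ropp_le_cancel.
    apply (nondecreasing_of_derive_nonneg (fun x => - (rho x + c * ln x))
             (fun x => - (drho x + c * / x)) T); try lra.
    - intros y Hy. apply (is_derive_opp (fun x => rho x + c * ln x)).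
      apply (is_derive_plus rho (fun x => c * ln x)); [apply Hd; exact Hy|].
      apply is_derive_scal. apply is_derive_ln. lra.
    - intros y Hy. specialize (Hneg y Hy).
      assert (drho y <= - c * / y).
      { apply (Rmult_le_reg_l y); [lra|]. replace (y * (- c * / y)) with (- c) by (field; lra).
        exact Hneg. }
      lra. }
  assert (Hinf : is_lim (fun x => rho x + c * ln x) p_infty p_infty).
  { eapply is_lim_plus; [exact Hl | apply is_lim_scal_l, is_lim_ln_p |].
    simpl. destruct (Rle_dec 0 c) as [Hc'|]; [|lra].
    destruct (Rle_lt_or_eq_dec 0 c Hc'); [reflexivity | lra]. }
  destruct (Hinf (fun y => rho T + c * ln T < y)) as [M HM].
  { exists (rho T + c * ln T). tauto. }
  specialize (HM (Rmax T M + 1) ltac:(pose proof (Rmax_r T M); lra)).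
  specialize (Hmono (Rmax T M + 1) ltac:(pose proof (Rmax_l T M); lra)). lra.
Qed.

Lemma is_derive_mul_ln_div (F f g : R -> R) (t : R) :
  0 < F t -> 0 < f t -> is_derive F t (f t) -> is_derive f t (f t * g t) ->
  is_derive (fun t => F t * ln (F t) / f t) t (1 - ln (F t) * (F t * g t / f t - 1)).
Proof.
  intros HF Hf HdF Hdf.
  assert (Hd := is_derive_div (fun t => F t * ln (F t)) f t _ _
    (is_derive_mult F (fun t => ln (F t)) t _ _ HdF
       (is_derive_comp ln F t _ _ (is_derive_ln _ HF) HdF) ltac:(intros; apply Rmult_comm))
    Hdf ltac:(lra)).
  replace (1 - ln (F t) * (F t * g t / f t - 1)) with
    ((plus (scal (f t) (ln (F t))) (scal (F t) (scal (f t) (/ F t))) * f t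
      - F t * ln (F t) * (f t * g t)) / f t ^ 2).
  - exact Hd.
  - unfold plus, scal; simpl. unfold mult; simpl. field. lra.
Qed.

Lemma is_derive_of_is_derive_ln (u : R -> R) (x du l : R) :
  0 < u x -> is_derive u x du -> is_derive (fun s => ln (u s)) x l ->
  is_derive u x (u x * l).
Proof.
  intros Hu Hd Hl.
  assert (Hl' := is_derive_comp ln u x _ _ (is_derive_ln (u x) Hu) Hd).
  apply is_derive_unique in Hl, Hl'. rewrite Hl in Hl'.
  replace (u x * l) with du; [exact Hd|].
  rewrite Hl'. simpl. unfold scal; simpl. unfold mult; simpl. field. lra.
Qed.

Section ConvexIncreasing.

Variables (G g1 g2 : R -> R) (a : R).
Hypothesis G_derive : forall x, a <= x -> is_derive G x (g1 x).
Hypothesis g1_derive : forall x, a <= x -> is_derive g1 x (g2 x).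
Hypothesis g1_pos : forall x, a <= x -> 0 < g1 x.
Hypothesis g2_pos : forall x, a <= x -> 0 < g2 x.

Lemma G_ge_tangent (x : R) : a <= x -> G a + g1 a * (x - a) <= G x.
Proof.
  intros Hx.
  assert (Hg1 : forall y, a <= y -> g1 a <= g1 y).
  { intros y Hy. apply (nondecreasing_of_derive_nonneg g1 g2 a); try lra.
    - exact g1_derive.
    - intros z Hz. left. apply g2_pos. exact Hz. }
  assert (H : G a - g1 a * a <= G x - g1 a * x); [|lra].
  apply (nondecreasing_of_derive_nonneg (fun y => G y - g1 a * y)
           (fun y => g1 y - g1 a * 1) a); try lra.
  - intros y Hy. apply (is_derive_minus G (fun y => g1 a * y)); [apply G_derive; exact Hy|].
    apply is_derive_scal, (is_derive_id (K := R_AbsRing)).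
  - intros y Hy. specialize (Hg1 y Hy). lra.
Qed.

Lemma G_eventually_gt (B : R) : Rbar_locally p_infty (fun x => B < G x).
Proof.
  pose proof (g1_pos a (Rle_refl a)) as Hg1a.
  exists (Rmax a (a + (B - G a) / g1 a)). intros x Hx.
  pose proof (Rmax_l a (a + (B - G a) / g1 a)) as Hxa.
  pose proof (Rmax_r a (a + (B - G a) / g1 a)) as HxB.
  pose proof (G_ge_tangent x ltac:(lra)) as Htan.
  assert (Hlin : B - G a < g1 a * (x - a)).
  { apply (Rmult_lt_reg_r (/ g1 a)); [apply Rinv_0_lt_compat; exact Hg1a|].
    replace (g1 a * (x - a) * / g1 a) with (x - a) by (field; lra).
    unfold Rdiv in HxB. lra. }
  lra.
Qed.

Variable q : R.
Hypothesis q_pos : 0 < q.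
Hypothesis ratio_lim : is_lim (fun x => g1 x ^ 2 / (G x * g2 x)) p_infty q.

Lemma is_lim_G_g2_div_g1_sq : is_lim (fun x => G x * g2 x / g1 x ^ 2) p_infty (/ q).
Proof.
  apply (is_lim_ext_loc (fun x => / (g1 x ^ 2 / (G x * g2 x)))).
  - destruct (G_eventually_gt 0) as [M HM]. exists (Rmax a M). intros x Hx.
    pose proof (Rmax_l a M). pose proof (Rmax_r a M).
    pose proof (g1_pos x ltac:(lra)). pose proof (g2_pos x ltac:(lra)).
    pose proof (HM x ltac:(lra)).
    field. repeat split; lra.
  - apply (is_lim_inv _ _ q ratio_lim). intros Hq. injection Hq. lra.
Qed.

Lemma g1_eventually_le_mul_G_sq :
  / 2 < q -> exists M, 0 < M /\ Rbar_locally p_infty (fun x => g1 x <= M * G x ^ 2).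
Proof.
  intros Hq.
  assert (Hq2 : / q < 2).
  { apply (Rmult_lt_reg_l q); [exact q_pos|]. rewrite Rinv_r by lra. lra. }
  destruct (filter_and _ _ (is_lim_eventually_lt _ _ _ is_lim_G_g2_div_g1_sq Hq2)
              (G_eventually_gt 0)) as [T0 HT0].
  set (T := Rmax a T0 + 1).
  assert (HT : a <= T /\ T0 < T)
    by (unfold T; pose proof (Rmax_l a T0); pose proof (Rmax_r a T0); lra).
  assert (Hx : forall x, T <= x -> 0 < g1 x /\ 0 < g2 x /\ 0 < G x /\ G x * g2 x <= 2 * g1 x ^ 2).
  { intros x Hx. destruct (HT0 x ltac:(lra)) as [HX HG].
    pose proof (g1_pos x ltac:(lra)). pose proof (g2_pos x ltac:(lra)).
    repeat split; try lra.
    apply (Rmult_lt_compat_r (g1 x ^ 2)) in HX; [|apply pow_lt; lra].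
    replace (G x * g2 x / g1 x ^ 2 * g1 x ^ 2) with (G x * g2 x) in HX by (field; lra). lra. }
  (* [G G'' <= 2 G'^2] says exactly that [G' / G^2] is nonincreasing. *)
  assert (Hnoninc : forall x, T <= x -> g1 x / G x ^ 2 <= g1 T / G T ^ 2).
  { intros x Hxt. apply Ropp_le_cancel.
    apply (nondecreasing_of_derive_nonneg (fun y => - (g1 y / G y ^ 2))
      (fun y => - ((g2 y * G y ^ 2 - g1 y * (INR 2 * g1 y * G y ^ 1)) / (G y ^ 2) ^ 2)) T);
      try lra.
    - intros y Hy. destruct (Hx y Hy) as [_ [_ [HGy _]]].
      apply (is_derive_opp (fun y => g1 y / G y ^ 2)).
      apply (is_derive_div g1 (fun y => G y ^ 2)); [apply g1_derive; lra| |].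
      + apply (is_derive_pow G 2). apply G_derive. lra.
      + apply pow_nonzero. lra.
    - intros y Hy. destruct (Hx y Hy) as [_ [_ [HGy Hconc]]].
      replace (- ((g2 y * G y ^ 2 - g1 y * (INR 2 * g1 y * G y ^ 1)) / (G y ^ 2) ^ 2))
        with ((2 * g1 y ^ 2 - G y * g2 y) / G y ^ 3) by (simpl; field; lra).
      apply Rdiv_le_0_compat; [lra | apply pow_lt; lra]. }
  destruct (Hx T (Rle_refl T)) as [Hg1T [_ [HGT _]]].
  exists (g1 T / G T ^ 2). split; [apply Rdiv_lt_0_compat; [lra | apply pow_lt; lra]|].
  exists T. intros x Hxt. destruct (Hx x ltac:(lra)) as [_ [_ [HGx _]]].
  specialize (Hnoninc x ltac:(lra)).
  apply (Rmult_le_compat_r (G x ^ 2)) in Hnoninc; [|left; apply pow_lt; lra].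
  replace (g1 x / G x ^ 2 * G x ^ 2) with (g1 x) in Hnoninc by (field; lra). lra.
Qed.

Lemma g1_eventually_le_exp_mul_G (eta : R) :
  / 2 < q -> 0 < eta -> Rbar_locally p_infty (fun x => g1 x <= exp (eta * G x)).
Proof.
  intros Hq Heta.
  destruct (g1_eventually_le_mul_G_sq Hq) as [M [HM HgM]].
  assert (Heta3 : 0 < eta ^ 3) by (apply pow_lt; lra).
  apply (filter_imp (fun x => g1 x <= M * G x ^ 2 /\ Rmax 1 (6 * M / eta ^ 3) < G x));
    [|exact (filter_and _ _ HgM (G_eventually_gt _))].
  intros x [Hg HG].
  pose proof (Rmax_l 1 (6 * M / eta ^ 3)). pose proof (Rmax_r 1 (6 * M / eta ^ 3)).
  assert (H6M : 6 * M <= eta ^ 3 * G x).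
  { apply (Rmult_le_reg_r (/ eta ^ 3)); [apply Rinv_0_lt_compat; lra|].
    replace (eta ^ 3 * G x * / eta ^ 3) with (G x) by (field; lra). unfold Rdiv in *. lra. }
  pose proof (pow_div_fact_le_exp 3 (eta * G x) ltac:(nra)) as Hexp.
  replace ((eta * G x) ^ 3 / INR (Factorial.fact 3)) with (eta ^ 3 * G x * G x ^ 2 / 6)
    in Hexp by (simpl; field).
  assert (M * G x ^ 2 <= eta ^ 3 * G x * G x ^ 2 / 6).
  { assert (0 < G x ^ 2) by (apply pow_lt; lra). nra. }
  lra.
Qed.

(* The index [rho = t G' / G] satisfies [t rho' = rho (1 + rho (G G'' / G'^2 - 1))]. *)
Lemma one_sub_inv_le_inv_of_is_lim_index (r : R) :
  0 < r -> is_lim (fun x => x * g1 x / G x) p_infty r -> 1 - / q <= / r.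
Proof.
  intros Hr Hrho.
  destruct (Rle_or_lt (1 - / q) (/ r)) as [Hle | Hgt]; [exact Hle | exfalso].
  set (L := r * (1 + r * (/ q - 1))).
  assert (HL : L < 0).
  { apply (Rmult_lt_compat_l r) in Hgt; [|exact Hr]. rewrite Rinv_r in Hgt by lra.
    unfold L. nra. }
  set (rho := fun x => x * g1 x / G x).
  set (X := fun x => G x * g2 x / g1 x ^ 2).
  assert (HlimL : is_lim (fun x => rho x * (1 + rho x * (X x - 1))) p_infty L).
  { apply (is_lim_mult _ _ _ r (1 + r * (/ q - 1))); [exact Hrho | | exact I].
    apply (is_lim_plus _ _ _ 1 (r * (/ q - 1))); [apply is_lim_const | | reflexivity].
    apply (is_lim_mult _ _ _ r (/ q - 1)); [exact Hrho | | exact I].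
    apply (is_lim_minus _ _ _ (/ q) 1); [exact is_lim_G_g2_div_g1_sq | apply is_lim_const |].
    reflexivity. }
  assert (HL2 : L < L / 2) by lra.
  destruct (filter_and _ _ (is_lim_eventually_lt _ _ _ HlimL HL2) (G_eventually_gt 0))
    as [T0 HT0].
  set (T := Rmax a (Rmax T0 0) + 1).
  assert (HT : a < T /\ T0 < T /\ 0 < T).
  { unfold T. pose proof (Rmax_l a (Rmax T0 0)). pose proof (Rmax_r a (Rmax T0 0)).
    pose proof (Rmax_l T0 0). pose proof (Rmax_r T0 0). lra. }
  apply (not_is_lim_of_mul_derive_le_neg rho
    (fun x => ((1 * g1 x + x * g2 x) * G x - x * g1 x * g1 x) / G x ^ 2) T (- (L / 2)) r);
    try lra.
  - intros x Hx. destruct (HT0 x ltac:(lra)) as [_ HG].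
    apply (is_derive_div (fun x => x * g1 x) G); [| apply G_derive; lra | lra].
    apply (is_derive_mult (fun x => x) g1); [apply (is_derive_id (K := R_AbsRing)) | | ].
    + apply g1_derive. lra.
    + intros; apply Rmult_comm.
  - intros x Hx. destruct (HT0 x ltac:(lra)) as [Hlt HG].
    pose proof (g1_pos x ltac:(lra)).
    replace (x * (((1 * g1 x + x * g2 x) * G x - x * g1 x * g1 x) / G x ^ 2))
      with (rho x * (1 + rho x * (X x - 1))) by (unfold rho, X; field; lra).
    lra.
  - exact Hrho.
Qed.

End ConvexIncreasing.

Section LogConvex.

Variables (f F g1 g2 : R -> R) (a q : R).
Hypothesis f_derive : forall x, a <= x -> is_derive f x (f x * g1 x).
Hypothesis F_derive : forall x, a <= x -> is_derive F x (f x).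
Hypothesis g1_derive : forall x, a <= x -> is_derive g1 x (g2 x).
Hypothesis f_pos : forall x, a <= x -> 0 < f x.
Hypothesis g1_pos : forall x, a <= x -> 0 < g1 x.
Hypothesis g2_pos : forall x, a <= x -> 0 < g2 x.
Hypothesis q_ge1 : 1 <= q.
Hypothesis ratio_lim : is_lim (fun x => g1 x ^ 2 / (ln (f x) * g2 x)) p_infty q.

Let G x := ln (f x).

Let G_derive : forall x, a <= x -> is_derive G x (g1 x).
Proof.
  intros x Hx. pose proof (f_pos x Hx) as Hfx.
  replace (g1 x) with (f x * g1 x * / f x) by (field; lra).
  exact (is_derive_comp ln f x _ _ (is_derive_ln (f x) Hfx) (f_derive x Hx)).
Qed.

Let q_pos : 0 < q. Proof. lra. Qed.
Let q_gt_half : / 2 < q. Proof. replace (/ 2) with (1 / 2) by field. lra. Qed.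
Let G_large := G_eventually_gt G g1 g2 a G_derive g1_derive g1_pos g2_pos.
Let X_lim := is_lim_G_g2_div_g1_sq G g1 g2 a G_derive g1_derive g1_pos g2_pos q q_pos ratio_lim.
Let g1_le_mul_G_sq := g1_eventually_le_mul_G_sq G g1 g2 a G_derive g1_derive g1_pos g2_pos
                        q q_pos ratio_lim q_gt_half.
Let g1_le_exp := g1_eventually_le_exp_mul_G G g1 g2 a G_derive g1_derive g1_pos g2_pos
                   q q_pos ratio_lim.

Let D x := F x - f x / g1 x.
Let E x := f x / (g1 x * G x).

Lemma E_eventually_ge (B : R) : Rbar_locally p_infty (fun x => B <= E x).
Proof.
  destruct g1_le_mul_G_sq as [M [HM HgM]].
  set (B' := Rmax 0 B).
  assert (HB' : 0 <= B' /\ B <= B') by (split; [apply Rmax_l | apply Rmax_r]).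
  assert (Ha : Rbar_locally p_infty (fun x => a < x)) by (exists a; tauto).
  apply (filter_imp (fun x => a < x /\ g1 x <= M * G x ^ 2 /\ Rmax 1 (24 * M * B') < G x));
    [|exact (filter_and _ _ Ha (filter_and _ _ HgM (G_large _)))].
  intros x [Hx [Hg HG]].
  pose proof (Rmax_l 1 (24 * M * B')). pose proof (Rmax_r 1 (24 * M * B')).
  pose proof (f_pos x ltac:(lra)) as Hfx. pose proof (g1_pos x ltac:(lra)) as Hg1x.
  assert (Hf : G x ^ 4 / 24 <= f x).
  { pose proof (pow_div_fact_le_exp 4 (G x) ltac:(lra)) as Hexp.
    unfold G in Hexp at 2. rewrite exp_ln in Hexp by lra.
    replace (INR (Factorial.fact 4)) with 24 in Hexp by (simpl; ring). exact Hexp. }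
  assert (HBE : B' * (g1 x * G x) <= f x).
  { assert (B' * (g1 x * G x) <= B' * (M * G x ^ 3)).
    { apply Rmult_le_compat_l; [lra|]. simpl in *. nra. }
    assert (B' * (M * G x ^ 3) <= G x ^ 4 / 24).
    { replace (G x ^ 4 / 24) with (G x / 24 * G x ^ 3) by (simpl; field).
      assert (0 < G x ^ 3) by (apply pow_lt; lra). nra. }
    lra. }
  assert (HgG : 0 < g1 x * G x) by (apply Rmult_lt_0_compat; lra).
  unfold E. apply (Rmult_le_reg_r (g1 x * G x)); [exact HgG|].
  replace (f x / (g1 x * G x) * (g1 x * G x)) with (f x) by (field; split; lra). nra.
Qed.

Lemma D_sub_E_eventually_nondecreasing (k : R) :
  0 < k < / q -> exists T, forall x y, T <= x -> x <= y -> D x - k * E x <= D y - k * E y.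
Proof.
  intros Hk.
  destruct (filter_and _ _ (is_lim_eventually_gt _ _ _ X_lim (proj2 Hk)) (G_large 0))
    as [T0 HT0].
  exists (Rmax a T0 + 1).
  assert (HT : forall x, Rmax a T0 + 1 <= x -> a <= x /\ T0 < x).
  { intros x Hx. pose proof (Rmax_l a T0). pose proof (Rmax_r a T0). lra. }
  apply (nondecreasing_of_derive_nonneg _
    (fun x => f x - (f x * g1 x * g1 x - f x * g2 x) / g1 x ^ 2
       - k * ((f x * g1 x * (g1 x * G x) - f x * (g2 x * G x + g1 x * g1 x))
              / (g1 x * G x) ^ 2))).
  - intros x Hx. destruct (HT x Hx) as [Hxa Hx0]. destruct (HT0 x Hx0) as [_ HG].
    pose proof (g1_pos x Hxa).
    apply (is_derive_minus D (fun x => k * E x));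
      [apply (is_derive_minus F (fun x => f x / g1 x))|].
    + apply F_derive. exact Hxa.
    + apply is_derive_div; [apply f_derive | apply g1_derive | ]; lra.
    + apply is_derive_scal, (is_derive_div f (fun x => g1 x * G x)); [apply f_derive; lra| |nra].
      apply (is_derive_mult g1 G); [apply g1_derive; lra | apply G_derive; lra |].
      intros; apply Rmult_comm.
  - intros x Hx. destruct (HT x Hx) as [Hxa Hx0]. destruct (HT0 x Hx0) as [HX HG].
    pose proof (f_pos x Hxa). pose proof (g1_pos x Hxa). pose proof (g2_pos x Hxa).
    assert (HkX : k * g1 x ^ 2 <= G x * g2 x).
    { apply (Rmult_lt_compat_r (g1 x ^ 2)) in HX; [|apply pow_lt; lra].
      replace (G x * g2 x / g1 x ^ 2 * g1 x ^ 2) with (G x * g2 x) in HX by (field; lra). lra. }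
    replace (f x - (f x * g1 x * g1 x - f x * g2 x) / g1 x ^ 2
       - k * ((f x * g1 x * (g1 x * G x) - f x * (g2 x * G x + g1 x * g1 x))
              / (g1 x * G x) ^ 2))
      with (f x / (g1 x ^ 2 * G x ^ 2)
            * (G x * (G x * g2 x - k * g1 x ^ 2) + k * (g2 x * G x + g1 x ^ 2)))
      by (field; lra).
    apply Rmult_le_pos.
    + apply Rdiv_le_0_compat; [lra|]. apply Rmult_lt_0_compat; apply pow_lt; lra.
    + apply Rplus_le_le_0_compat; apply Rmult_le_pos; try nra.
Qed.

Lemma F_g1_div_f_eventually_ge (k' : R) :
  k' < / q -> Rbar_locally p_infty (fun x => k' / G x <= F x * g1 x / f x - 1).
Proof.
  intros Hk'.
  set (k := (Rmax k' 0 + / q) / 2).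
  assert (Hk : 0 < k < / q /\ k' < k).
  { pose proof (Rmax_l k' 0). pose proof (Rmax_r k' 0). pose proof (Rinv_0_lt_compat q q_pos).
    unfold k. destruct (Rle_dec k' 0); [rewrite Rmax_right by lra | rewrite Rmax_left by lra];
    lra. }
  destruct Hk as [Hk Hk'k].
  destruct (D_sub_E_eventually_nondecreasing k Hk) as [T HT].
  set (c0 := k * E T - D T).
  assert (Hev : Rbar_locally p_infty (fun x => Rmax a T < x)) by (exists (Rmax a T); tauto).
  apply (filter_imp (fun x => Rmax a T < x /\ 0 < G x /\ c0 / (k - k') <= E x));
    [|exact (filter_and _ _ Hev (filter_and _ _ (G_large 0) (E_eventually_ge _)))].
  intros x [Hx [HG HE]].
  pose proof (Rmax_l a T). pose proof (Rmax_r a T).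
  pose proof (f_pos x ltac:(lra)). pose proof (g1_pos x ltac:(lra)).
  assert (HE0 : 0 < E x) by (unfold E; apply Rdiv_lt_0_compat; nra).
  assert (HDE : k' * E x <= D x).
  { specialize (HT T x (Rle_refl T) ltac:(lra)).
    apply (Rmult_le_compat_l (k - k')) in HE; [|lra].
    replace ((k - k') * (c0 / (k - k'))) with c0 in HE by (field; lra).
    unfold c0 in HE. lra. }
  replace (F x * g1 x / f x - 1) with (D x / (G x * E x)) by (unfold D, E; field; lra).
  replace (k' / G x) with (k' * E x / (G x * E x)) by (field; lra).
  apply Rmult_le_compat_r; [|exact HDE].
  left. apply Rinv_0_lt_compat. nra.
Qed.

Lemma ln_F_eventually_ge (eta : R) :
  0 < eta -> Rbar_locally p_infty (fun x => 0 < F x /\ (1 - eta) * G x <= ln (F x)).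
Proof.
  intros Heta.
  assert (Ha : Rbar_locally p_infty (fun x => a < x)) by (exists a; tauto).
  apply (filter_imp (fun x => a < x /\ 0 / G x <= F x * g1 x / f x - 1
                              /\ g1 x <= exp (eta * G x)));
    [|exact (filter_and _ _ Ha (filter_and _ _
        (F_g1_div_f_eventually_ge 0 (Rinv_0_lt_compat q q_pos))
        (g1_le_exp eta q_gt_half Heta)))].
  intros x [Hx [HF Hg]].
  pose proof (f_pos x ltac:(lra)) as Hfx. pose proof (g1_pos x ltac:(lra)) as Hg1x.
  unfold Rdiv at 1 in HF. rewrite Rmult_0_l in HF.
  assert (HFf : f x / g1 x <= F x).
  { apply (Rmult_le_reg_r (g1 x / f x)); [apply Rdiv_lt_0_compat; lra|].
    replace (f x / g1 x * (g1 x / f x)) with 1 by (field; lra).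
    replace (F x * (g1 x / f x)) with (F x * g1 x / f x) by (field; lra). lra. }
  assert (Hexp : exp ((1 - eta) * G x) <= f x / g1 x).
  { replace ((1 - eta) * G x) with (G x - eta * G x) by ring.
    assert (HfG : exp (G x) = f x) by (apply exp_ln; lra).
    unfold Rminus, Rdiv. rewrite exp_plus, exp_Ropp, HfG.
    apply Rmult_le_compat_l; [lra|]. apply Rinv_le_contravar; lra. }
  pose proof (exp_pos ((1 - eta) * G x)).
  split; [lra|].
  rewrite <- (ln_exp ((1 - eta) * G x)). apply ln_le; lra.
Qed.

Lemma F_ln_F_div_f_derive_eventually_le (eps : R) :
  0 < eps ->
  Rbar_locally p_infty (fun t =>
    is_derive (fun t => F t * ln (F t) / f t) t (1 - ln (F t) * (F t * g1 t / f t - 1)) /\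
    1 - ln (F t) * (F t * g1 t / f t - 1) <= 1 - / q + eps).
Proof.
  intros Heps.
  assert (Hiq : 0 < / q <= 1).
  { split; [apply Rinv_0_lt_compat; lra|]. rewrite <- Rinv_1. apply Rinv_le_contravar; lra. }
  set (eta := Rmin (eps / 3) (/ q / 4)).
  assert (Heta : 0 < eta /\ eta <= eps / 3 /\ eta <= / q / 4)
    by (unfold eta; repeat split; [apply Rmin_glb_lt | apply Rmin_l | apply Rmin_r]; lra).
  assert (Ha : Rbar_locally p_infty (fun x => a < x)) by (exists a; tauto).
  assert (Hk' : / q - 2 * eta < / q) by lra.
  apply (filter_imp (fun t => a < t /\ 0 < G t
      /\ (/ q - 2 * eta) / G t <= F t * g1 t / f t - 1
      /\ 0 < F t /\ (1 - eta) * G t <= ln (F t)));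
    [|exact (filter_and _ _ Ha (filter_and _ _ (G_large 0) (filter_and _ _
        (F_g1_div_f_eventually_ge _ Hk') (ln_F_eventually_ge eta (proj1 Heta)))))].
  intros t [Ht [HG [Hratio [HF HlnF]]]].
  split.
  - apply is_derive_mul_ln_div; [exact HF | apply f_pos | apply F_derive | apply f_derive]; lra.
  - assert (Hprod : (1 - eta) * G t * ((/ q - 2 * eta) / G t)
                    <= ln (F t) * (F t * g1 t / f t - 1)).
    { apply Rmult_le_compat; try lra.
      - apply Rmult_le_pos; lra.
      - apply Rdiv_le_0_compat; lra. }
    replace ((1 - eta) * G t * ((/ q - 2 * eta) / G t)) with ((1 - eta) * (/ q - 2 * eta))
      in Hprod by (field; lra).
    nra.
Qed.

End LogConvex.

Lemma limsup_derive_le_of_eventually (h dh : R -> R) (L : R) :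
  (forall eps, 0 < eps ->
     Rbar_locally p_infty (fun t => is_derive h t (dh t) /\ dh t <= L + eps)) ->
  (exists T, forall t, T <= t -> exists d, derivable_pt_lim h t d) /\
  (forall eps, 0 < eps -> exists T, forall t d, T <= t ->
       derivable_pt_lim h t d -> d <= L + eps).
Proof.
  intros Hev. split.
  - destruct (Hev 1 Rlt_0_1) as [T HT].
    exists (T + 1). intros t Ht. exists (dh t). apply is_derive_Reals, (HT t ltac:(lra)).
  - intros eps Heps. destruct (Hev eps Heps) as [T HT].
    exists (T + 1). intros t d Ht Hd. destruct (HT t ltac:(lra)) as [Hdh Hle].
    apply is_derive_Reals in Hdh. rewrite (uniqueness_limite _ _ _ _ Hd Hdh). exact Hle.
Qed.

Theorem lemma2p12 (f f1 : R -> R) (t0 : R) (g1 g2 : R -> R) (q : R) (p : Rbar) :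
  0 <= t0 ->
  (* f : [0,oo) -> [0,oo) is C^1 on [0,oo) with derivative f1 *)
  (forall t, 0 <= t -> 0 <= f t) ->
  (forall t, 0 <= t -> deriv_within (fun s => 0 <= s) f f1 t) ->
  (forall t, 0 <= t -> cont_within (fun s => 0 <= s) f1 t) ->
  (* f > 0 on [t0,oo) and f in C^2([t0,oo)) *)
  (forall t, t0 <= t -> 0 < f t) ->
  (exists f2 : R -> R,
     (forall t, t0 <= t -> deriv_within (fun s => t0 <= s) f1 f2 t) /\
     (forall t, t0 <= t -> cont_within (fun s => t0 <= s) f2 t)) ->
  (* g = log f on [t0,oo); g1 = g', g2 = g'' *)
  (forall t, t0 <= t -> deriv_within (fun s => t0 <= s) (fun s => ln (f s)) g1 t) ->
  (forall t, t0 <= t -> deriv_within (fun s => t0 <= s) g1 g2 t) ->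
  (* (H1)(i) *)
  (forall t, t0 <= t -> 0 < g1 t /\ 0 < g2 t) ->
  ((q = 1 /\ Rbar_lt (Finite 0) p) \/ (1 < q /\ exists r, p = Finite r /\ 0 < r)) ->
  is_lim (fun t => (g1 t) ^ 2 / (ln (f t) * g2 t)) p_infty (Finite q) ->
  is_lim (fun t => t * g1 t / ln (f t)) p_infty p ->
  (* (H1)(ii) *)
  (q = 1 ->
     (forall s t, t0 <= s -> s <= t -> s * g1 s / ln (f s) <= t * g1 t / ln (f t)) /\
     exists (k : nat) (gh gh1 gh2 : R -> R),
       (1 <= k)%nat /\
       (forall t, t0 <= t -> deriv_within (fun s => t0 <= s) gh gh1 t) /\
       (forall t, t0 <= t -> deriv_within (fun s => t0 <= s) gh1 gh2 t) /\
       (forall t, t0 <= t -> cont_within (fun s => t0 <= s) gh2 t) /\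
       (forall t, t0 <= t -> f t = exp_iter k (gh t)) /\
       (forall s t, t0 <= s -> s <= t -> gh1 t / gh t <= gh1 s / gh s)) ->
  let F := fun t => RInt f 0 t in
  let h := fun t => F t * ln (F t) / f t in
  (* h' exists near +oo, and limsup_{t->oo} h'(t) <= 1/p *)
  (exists T, forall t, T <= t -> exists d, derivable_pt_lim h t d) /\
  (forall eps, 0 < eps -> exists T, forall t d, T <= t ->
       derivable_pt_lim h t d -> d <= recip_ext p + eps).
Proof.
  intros Ht0 _ Hfd _ Hfpos _ HGd Hg1d Hg12 Hcase Hlq Hlp _ F h.
  set (a := t0 + 1).
  assert (Hta : forall x, a <= x -> t0 < x) by (unfold a; intros; lra).
  assert (Hf_pos : forall x, a <= x -> 0 < f x)
    by (intros x Hx; apply Hfpos; pose proof (Hta x Hx); lra).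
  assert (Hg1_pos : forall x, a <= x -> 0 < g1 x)
    by (intros x Hx; apply Hg12; pose proof (Hta x Hx); lra).
  assert (Hg2_pos : forall x, a <= x -> 0 < g2 x)
    by (intros x Hx; apply Hg12; pose proof (Hta x Hx); lra).
  assert (HG : forall x, a <= x -> is_derive (fun s => ln (f s)) x (g1 x))
    by (intros x Hx; apply (is_derive_of_deriv_within t0), HGd; pose proof (Hta x Hx); lra).
  assert (Hg1 : forall x, a <= x -> is_derive g1 x (g2 x))
    by (intros x Hx; apply (is_derive_of_deriv_within t0), Hg1d; pose proof (Hta x Hx); lra).
  assert (Hf : forall x, a <= x -> is_derive f x (f x * g1 x)).
  { intros x Hx. apply (is_derive_of_is_derive_ln f x (f1 x)); [auto | | auto].
    apply (is_derive_of_deriv_within 0), Hfd; pose proof (Hta x Hx); lra. }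
  assert (HF : forall x, a <= x -> is_derive F x (f x)).
  { intros x Hx. apply is_derive_RInt0; [|pose proof (Hta x Hx); lra].
    intros y Hy. exact (cont_within_of_deriv_within _ _ _ _ (Hfd y Hy)). }
  assert (Hq : 1 <= q) by (destruct Hcase as [[-> _] | [Hq _]]; lra).
  assert (Hrec : 1 - / q <= recip_ext p).
  { destruct Hcase as [[-> Hp] | [Hq1 [r [-> Hr]]]].
    - rewrite Rinv_1, Rminus_diag.
      destruct p as [r | |]; simpl in *; [left; apply Rinv_0_lt_compat | | ]; lra.
    - exact (one_sub_inv_le_inv_of_is_lim_index _ _ _ a HG Hg1 Hg1_pos Hg2_pos q
               ltac:(lra) Hlq r Hr Hlp). }
  apply (limsup_derive_le_of_eventually h (fun t => 1 - ln (F t) * (F t * g1 t / f t - 1))).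
  intros eps Heps.
  eapply filter_imp;
    [|exact (F_ln_F_div_f_derive_eventually_le f F g1 g2 a q Hf HF Hg1 Hf_pos Hg1_pos Hg2_pos
               Hq Hlq eps Heps)].
  intros t [Hd Hle]. split; [exact Hd | lra].
Qed.
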